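(* For any tournament $\mathrel{W}$, every $\mathrel{W}$-efficient ranking is $\mathrel{W}$-unimprovable.
   Context: Let $\mathcal{X}$ be a finite set of alternatives. A proto-ranking is an irreflexive and transitive binary relation on $\mathcal{X}$; a ranking is a total proto-ranking; a tournament is a total and asymmetric binary relation on $\mathcal{X}$. The chair has a fixed preference $\succ$, a ranking on $\mathcal{X}$. Interaction: given a tournament $\mathrel{W}$, start from $R_0=\varnothing$; in each period with $R_{t-1}$ not total the chair offers a pair $\{x,y\}$ unranked by $R_{t-1}$, the winner is $x$ if $x\mathrel{W}y$ and $y$ otherwise, and $R_t$ is the transitive closure of $R_{t-1}\cup\{(\text{winner},\text{loser})\}$; stop when $R_t$ is total. A strategy assigns to each non-terminal history (sequence of (winner, loser) pairs) a pair unranked at it; its outcome under $\mathrel{W}$ is the final ranking. A ranking is $\mathrel{W}$-feasible if it is the outcome under $\mathrel{W}$ of some strategy. $R$ is more aligned with $\succ$ than $R'$ if for all $x\succ y$, $xR'y$ implies $xRy$. A ranking is $\mathrel{W}$-unimprovable if no other $\mathrel{W}$-feasible ranking is more aligned with $\succ$ than it. A ranking $R$ is $\mathrel{W}$-efficient if $x\succ y$ and $x\mathrel{W}y$ imply $xRy$. *)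

From mathcomp Require Import all_boot.
Set Implicit Arguments. Unset Strict Implicit. Unset Printing Implicit Defensive.

Section Defs.
Variable X : finType.

Definition irreflexive_rel (R : rel X) := forall x, ~~ R x x.
Definition total_rel (R : rel X) := forall x y, x != y -> R x y || R y x.
Definition asymmetric_rel (R : rel X) := forall x y, R x y -> ~~ R y x.

Definition proto_ranking (R : rel X) := irreflexive_rel R /\ transitive R.
Definition ranking (R : rel X) := proto_ranking R /\ total_rel R.
Definition tournament (W : rel X) := total_rel W /\ asymmetric_rel W.

(* a history is a sequence of (winner, loser) pairs *)
Definition history := seq (X * X).

(* R_h : transitive closure of the set of (winner, loser) pairs of h
   (starting from R_0 = empty) *)
Definition hist_edges (h : history) : rel X := fun x y => (x, y) \in h.
Definition hist_rel (h : history) : rel X :=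
  fun x y => [exists z, hist_edges h x z && connect (hist_edges h) z y].

Definition unranked (R : rel X) (p : X * X) :=
  [/\ p.1 != p.2, ~~ R p.1 p.2 & ~~ R p.2 p.1].

Definition strategy := history -> X * X.

Definition valid_strategy (sigma : strategy) :=
  forall h : history, ~ total_rel (hist_rel h) -> unranked (hist_rel h) (sigma h).

Definition contest (W : rel X) (p : X * X) : X * X :=
  if W p.1 p.2 then (p.1, p.2) else (p.2, p.1).

Definition step (W : rel X) (sigma : strategy) (h : history) : history :=
  if [forall x, forall y, (x != y) ==> (hist_rel h x y || hist_rel h y x)]
  then h else rcons h (contest W (sigma h)).

(* each period ranks a new ordered pair, so the interaction stops after at
   most #|X| * #|X| periods; after that the history is constant *)
Definition play (W : rel X) (sigma : strategy) : history :=
  iter (#|X| * #|X|) (step W sigma) [::].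

Definition outcome (W : rel X) (sigma : strategy) : rel X :=
  hist_rel (play W sigma).

Definition feasible (W : rel X) (R : rel X) :=
  exists sigma, valid_strategy sigma /\ R =2 outcome W sigma.

Definition more_aligned (pref : rel X) (R R' : rel X) :=
  forall x y, pref x y -> R' x y -> R x y.

Definition unimprovable (pref W : rel X) (R : rel X) :=
  ~ exists R' : rel X, [/\ feasible W R', ~ (R' =2 R) & more_aligned pref R' R].

Definition efficient (pref W : rel X) (R : rel X) :=
  forall x y, pref x y -> W x y -> R x y.

End Defs.

From mathcomp Require Import all_boot.
Set Implicit Arguments. Unset Strict Implicit. Unset Printing Implicit Defensive.

(* Every period of a play is won by the [W]-winner of the offered pair, and the
   play ends in a ranking [R'] (the history stays acyclic, and each period ranks
   a new pair).  If [R'] is more aligned with [pref] than an efficient ranking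
   [R], then [R] ranks every winner above its loser: by efficiency when [pref]
   agrees with the win, and otherwise because [R] reversing the pair would make
   [R'] rank it both ways.  So [R'] is contained in [R], and two rankings one
   contained in the other are equal. *)

Section Relations.
Variable T : finType.
Implicit Types (R S W : rel T) (p : T * T).

Lemma forall_totalP R :
  reflect (total_rel R) [forall x, forall y, (x != y) ==> (R x y || R y x)].
Proof.
apply: (iffP forallP) => [totR x y nxy | totR x].
  by move/forallP/(_ y)/implyP: (totR x); apply.
by apply/forallP=> y; apply/implyP; apply: totR.
Qed.

Lemma total_subrel_eq R S :
  proto_ranking R -> total_rel S -> subrel S R -> S =2 R.
Proof.
move=> [irrR trR] totS sSR x y; apply/idP/idP=> [|Rxy]; first exact: sSR.
have nxy : x != y by apply: contraTneq Rxy => ->; apply: irrR.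
case/orP: (totS _ _ nxy) => // /sSR Ryx.
by have := irrR x; rewrite (trR _ _ _ Rxy Ryx).
Qed.

Lemma contest_wins W p : total_rel W -> p.1 != p.2 ->
  W (contest W p).1 (contest W p).2.
Proof.
move=> totW np; rewrite /contest; case: ifP => //= nW.
by case/orP: (totW _ _ np) => //; rewrite nW.
Qed.

Lemma unranked_contest R W p : unranked R p -> unranked R (contest W p).
Proof.
by rewrite /contest; case: ifP => // _ [np nR12 nR21]; split; rewrite // eq_sym.
Qed.

End Relations.

Section History.
Variable X : finType.
Implicit Types (h : history X) (R : rel X) (a b x y z : X).

Lemma hist_edge_rel h : subrel (hist_edges h) (hist_rel h).
Proof. by move=> x y exy; apply/existsP; exists y; rewrite exy connect0. Qed.

Lemma connect_hist_rel h x y :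
  connect (hist_edges h) x y = (x == y) || hist_rel h x y.
Proof.
apply/idP/idP=> [/connectP[[_ ->|z p]] |
                /orP[/eqP-> | /existsP[z /andP[exz czy]]]].
- by rewrite eqxx.
- move=> /= /andP[exz pz] ->; apply/orP; right; apply/existsP; exists z.
  by rewrite exz; apply/connectP; exists p.
- exact: connect0.
- exact: connect_trans (connect1 exz) czy.
Qed.

Lemma hist_rel_trans h : transitive (hist_rel h).
Proof.
move=> y x z /existsP[w /andP[exw cwy]] hyz; apply/existsP; exists w.
by rewrite exw (connect_trans cwy) // connect_hist_rel hyz orbT.
Qed.

Lemma hist_rel_min h R :
  transitive R -> subrel (hist_edges h) R -> subrel (hist_rel h) R.
Proof.
move=> trR sER x y /existsP[z /andP[/sER Rxz /connectP[p]]].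
elim: p x z Rxz => [|w p IHp] x z Rxz /=; first by move=> _ ->.
by case/andP=> /sER Rzw; apply: IHp (trR _ _ _ Rxz Rzw).
Qed.

Lemma hist_edges_rcons h a b x y :
  hist_edges (rcons h (a, b)) x y = hist_edges h x y || ((x, y) == (a, b)).
Proof. by rewrite /hist_edges mem_rcons in_cons orbC. Qed.

Lemma hist_rel_rcons h p : subrel (hist_rel h) (hist_rel (rcons h p)).
Proof.
have sub : subrel (hist_edges h) (hist_edges (rcons h p)).
  by move=> x y; rewrite /hist_edges mem_rcons in_cons => ->; rewrite orbT.
apply: hist_rel_min; first exact: hist_rel_trans.
by move=> x y /sub; apply: hist_edge_rel.
Qed.

Lemma hist_rel_rcons_new h a b : hist_rel (rcons h (a, b)) a b.
Proof. by apply: hist_edge_rel; rewrite hist_edges_rcons eqxx orbT. Qed.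

Lemma connect_rcons h a b x y : connect (hist_edges (rcons h (a, b))) x y ->
  connect (hist_edges h) x y \/
  connect (hist_edges h) x a /\ connect (hist_edges h) b y.
Proof.
move/connectP=> [p]; elim: p x => [|z p IHp] x /=; first by move=> _ ->; left.
move=> /andP[ez pz] /(IHp z pz); rewrite hist_edges_rcons in ez.
case/orP: ez => [exz | /eqP[-> ->]]; last by case=> [|[]]; right.
by case=> [czy | [cza cby]]; [left | right];
  rewrite ?(connect_trans (connect1 exz)).
Qed.

(* The new edge [a -> b] can only close a cycle through a path from [b] to [a]. *)
Lemma irreflexive_hist_rel_rcons h a b :
  irreflexive_rel (hist_rel h) -> a != b -> ~~ hist_rel h b a ->
  irreflexive_rel (hist_rel (rcons h (a, b))).
Proof.
move=> irrh nab nba; have nCba : ~~ connect (hist_edges h) b a.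
  by rewrite connect_hist_rel eq_sym negb_or nab.
move=> x; apply/negP => /existsP[z /andP[]]; rewrite hist_edges_rcons.
case/orP=> [exz | /eqP[-> ->]] /connect_rcons; last first.
  by case=> [|[]] cba *; rewrite cba in nCba.
case=> [czx | [cza cbx]].
  by have /negP[] := irrh x; apply/existsP; exists z; rewrite exz.
have /negP[] := nCba; apply: connect_trans cbx _.
exact: connect_trans (connect1 exz) cza.
Qed.

Definition ranked_pairs h := [set p : X * X | hist_rel h p.1 p.2].

Lemma card_ranked_pairs_rcons h a b : ~~ hist_rel h a b ->
  #|ranked_pairs h| < #|ranked_pairs (rcons h (a, b))|.
Proof.
move=> nab; apply/proper_card/properP; split.
  by apply/subsetP=> p; rewrite !inE; apply: hist_rel_rcons.
by exists (a, b); rewrite !inE /= ?hist_rel_rcons_new ?(negbTE nab).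
Qed.

End History.

Section Play.
Variables (X : finType) (W : rel X) (sigma : strategy X).
Hypotheses (tW : tournament W) (sigmaP : valid_strategy sigma).

Definition wins_only (h : history X) := all (fun p => W p.1 p.2) h.

Definition play_inv k (h : history X) :=
  [/\ wins_only h, irreflexive_rel (hist_rel h)
    & total_rel (hist_rel h) \/ k <= #|ranked_pairs h|].

Lemma play_inv_step k h : play_inv k h -> play_inv k.+1 (step W sigma h).
Proof.
move=> [Wh irrh count]; rewrite /step.
case: forall_totalP => [toth | ntot]; first by split=> //; left.
have unr := sigmaP ntot; have [np _ _] := unr.
have Wab := contest_wins tW.1 np.
have [nab nRab nRba] := unranked_contest W unr.
case: (contest W (sigma h)) nab nRab nRba Wab => a b /= nab nRab nRba Wab.
split; first by rewrite /wins_only all_rcons Wab.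
  exact: irreflexive_hist_rel_rcons.
right; case: count => // k_le.
exact: leq_ltn_trans k_le (card_ranked_pairs_rcons nRab).
Qed.

Lemma play_inv_iter k : play_inv k (iter k (step W sigma) [::]).
Proof.
elim: k => [|k IHk]; last exact: play_inv_step.
by split; [| move=> x; apply/existsP=> -[] | right].
Qed.

Lemma play_wins_only : wins_only (play W sigma).
Proof. by have [] := play_inv_iter (#|X| * #|X|). Qed.

(* At most [#|X| * #|X| - 1] pairs can be ranked, since [(x, x)] never is. *)
Lemma outcome_ranking : ranking (outcome W sigma).
Proof.
have [_ irrh count] := play_inv_iter (#|X| * #|X|).
rewrite /outcome /play; set h := iter _ _ _ in irrh count *.
do 2?split; [exact: irrh | exact: hist_rel_trans |].
case: count => // count; apply/forall_totalP.
apply: contraTT count => /forallPn[x _].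
rewrite -ltnNge -card_prod -cardsT; apply/proper_card/properP; split.
  exact: subsetT.
by exists (x, x); rewrite !inE /= ?irrh.
Qed.

End Play.

Section Efficiency.
Variables (X : finType) (pref W R : rel X).
Hypotheses (tot_pref : total_rel pref) (rankR : ranking R)
  (effR : efficient pref W R).

Lemma efficient_hist_subrel (h : history X) :
  wins_only W h -> irreflexive_rel (hist_rel h) ->
  more_aligned pref (hist_rel h) R -> subrel (hist_rel h) R.
Proof.
have [[_ trR] totR] := rankR.
move=> /allP Wh irrh aligned; apply: hist_rel_min => // u v huv.
have h_uv := hist_edge_rel huv.
have nuv : u != v by apply: contraTneq h_uv => ->; apply: irrh.
case/orP: (tot_pref nuv) => [pref_uv | pref_vu]; first exact: effR (Wh _ huv).
case/orP: (totR _ _ nuv) => // /(aligned _ _ pref_vu) h_vu.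
by have := irrh u; rewrite (hist_rel_trans h_uv h_vu).
Qed.

End Efficiency.

Theorem lemma1 (X : finType) (pref W R : rel X) :
  ranking pref -> tournament W -> ranking R -> efficient pref W R ->
  unimprovable pref W R.
Proof.
move=> [_ tot_pref] tW rankR effR [R' [[sigma [sigmaP R'E]] neqR' aligned]].
have [[irr_out _] tot_out] := outcome_ranking tW sigmaP.
have aligned_out : more_aligned pref (outcome W sigma) R.
  by move=> x y pref_xy; rewrite -R'E; apply: aligned.
have sub_out : subrel (outcome W sigma) R.
  exact: (efficient_hist_subrel tot_pref rankR effR (play_wins_only tW sigmaP)
           irr_out aligned_out).
apply: neqR' => x y; rewrite R'E.
exact: total_subrel_eq rankR.1 tot_out sub_out x y.
Qed.
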